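(* Let $H$ be a complex Hilbert space and let $\varphi_n,\psi_n\in C[0,1]$ ($n\ge1$) be real-valued with $\varphi_n\to1$ and $\psi_n\to0$ (pointwise on $[0,1]$) as $n\to\infty$. Then for every $t\in[0,1]$, $\lim_{n\to\infty}n_t(\varphi_n,\psi_n;H)=\frac12$.
   Context: $S_1(H)$ is the unit sphere of $H$; for real $\varphi,\psi$ on $[0,1]$, $\omega_t(\varphi,\psi;A)=\sup_{x\in S_1(H)}|\langle(\varphi(t)A+\psi(t)A^* )x,x\rangle|$, and the weighted numerical index is $n_t(\varphi,\psi;H)=\inf\{\omega_t(\varphi,\psi;A):A\in\mathbb{B}(H),\ \|A\|=1\}$. *)

From HB Require Import structures.
From mathcomp Require Import all_boot all_order all_algebra.
From mathcomp Require Import all_classical all_reals all_analysis.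
From mathcomp Require Import complex.
Set Implicit Arguments. Unset Strict Implicit. Unset Printing Implicit Defensive.
Import Order.TTheory GRing.Theory Num.Theory.
Local Open Scope ring_scope.
Local Open Scope classical_set_scope.
Local Open Scope complex_scope.

Definition inner_product (R : realType) (V : lmodType R[i]) (ip : V -> V -> R[i]) :=
  [/\ (forall (a : R[i]) (x y z : V), ip (a *: x + y) z = a * ip x z + ip y z),
      (forall x y : V, ip y x = (ip x y)^*),
      (forall x : V, 0 <= ip x x) &
      (forall x : V, ip x x = 0 -> x = 0)].

Definition hnorm (R : realType) (V : lmodType R[i]) (ip : V -> V -> R[i]) (x : V) : R :=
  Num.sqrt (complex.Re (ip x x)).

Definition hcomplete (R : realType) (V : lmodType R[i]) (ip : V -> V -> R[i]) :=
  forall u : nat -> V,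
    (forall e : R, 0 < e -> exists N : nat, forall m n : nat, (N <= m)%N -> (N <= n)%N ->
        hnorm ip (u m - u n) < e) ->
    exists l : V, forall e : R, 0 < e -> exists N : nat, forall n : nat, (N <= n)%N ->
        hnorm ip (u n - l) < e.

Definition hilbert (R : realType) (V : lmodType R[i]) (ip : V -> V -> R[i]) :=
  inner_product ip /\ hcomplete ip.

Definition unit_sphere (R : realType) (V : lmodType R[i]) (ip : V -> V -> R[i]) : set V :=
  [set x | hnorm ip x = 1].

Definition bounded_op (R : realType) (V : lmodType R[i]) (ip : V -> V -> R[i]) (A : V -> V) :=
  (forall (a : R[i]) (x y : V), A (a *: x + y) = a *: A x + A y) /\
  exists M : R, forall x : V, hnorm ip (A x) <= M * hnorm ip x.

Definition is_adjoint (R : realType) (V : lmodType R[i]) (ip : V -> V -> R[i]) (A B : V -> V) :=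
  forall x y : V, ip (A x) y = ip x (B y).

Definition opnorm (R : realType) (V : lmodType R[i]) (ip : V -> V -> R[i]) (A : V -> V) : R :=
  sup [set hnorm ip (A x) | x in unit_sphere ip].

(* omega_t(phi,psi;A) = sup_{x in S_1(H)} |<(phi(t)A + psi(t)A^* ) x, x>|, with B = A^* *)
Definition omega_t (R : realType) (V : lmodType R[i]) (ip : V -> V -> R[i])
  (phi psi : R -> R) (t : R) (A B : V -> V) : R :=
  sup [set ComplexField.Normc.normc (ip ((phi t)%:C *: A x + (psi t)%:C *: B x) x) | x in unit_sphere ip].

Definition n_t (R : realType) (V : lmodType R[i]) (ip : V -> V -> R[i])
  (phi psi : R -> R) (t : R) : R :=
  inf [set w : R | exists A B : V -> V,
          [/\ bounded_op ip A, opnorm ip A = 1, is_adjoint ip A B &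
               w = omega_t ip phi psi t A B]].

From mathcomp Require Import all_boot all_order all_algebra.
From mathcomp Require Import all_classical all_reals all_analysis.
From mathcomp Require Import complex.
From mathcomp Require Import ring lra.
Import Order.TTheory GRing.Theory Num.Theory.
Import numFieldNormedType.Exports.
Set Implicit Arguments. Unset Strict Implicit.
Local Open Scope ring_scope.
Local Open Scope classical_set_scope.
Local Open Scope complex_scope.
Import ComplexField.Normc.

(* For an operator A of norm one, |<Ax,x>| <= 1 on the unit sphere, so
   |<(a A + b A^* )x,x>| >= |<Ax,x>| - |a - 1| - |b|: the weighted numerical
   radius is at least w(A) - |a - 1| - |b|, where w(A) is the numerical radius.
   The polarization identity gives ||A|| <= 2 w(A), hence the lower bound
   1/2 - |a - 1| - |b|.  Conversely, for orthonormal u, v the rank-one operator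
   x |-> <x,u> v has norm one and adjoint x |-> <x,v> u, and Bessel's inequality
   |<x,u>|^2 + |<x,v>|^2 <= 1 bounds its weighted numerical radius by
   (|a| + |b|) / 2.  With a = phi_n(t) -> 1 and b = psi_n(t) -> 0 both bounds
   tend to 1/2. *)

Section ComplexModulus.
Variable R : rcfType.

Lemma normc_ge0 (z : R[i]) : 0 <= normc z.
Proof. by case: z => a b; apply: sqrtr_ge0. Qed.

Lemma normc_real (a : R) : normc a%:C = `|a|.
Proof. by rewrite /= expr0n addr0 sqrtr_sqr. Qed.

Lemma normc_conj (z : R[i]) : normc (conjc z) = normc z.
Proof. by case: z => a b /=; rewrite sqrrN. Qed.

Lemma normc_i : normc ('i%C : R[i]) = 1.
Proof. by rewrite /= expr0n expr1n add0r sqrtr1. Qed.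

Lemma conjc_i : conjc 'i%C = - 'i%C :> R[i].
Proof. by apply/eqP; rewrite eq_complex /= oppr0 !eqxx. Qed.

Lemma normc_nat n : normc (n%:R : R[i]) = n%:R.
Proof. by rewrite normcMn normc1. Qed.

Lemma sqr_normc_real (z : R[i]) : (normc z ^+ 2)%:C = z * conjc z.
Proof. by rewrite rmorphXn -sqr_normc. Qed.

End ComplexModulus.

Section InnerProduct.
Variable R : realType.
Variable V : lmodType R[i].
Variable ip : V -> V -> R[i].
Hypothesis hip : inner_product ip.

Lemma ipZDl a x y z : ip (a *: x + y) z = a * ip x z + ip y z.
Proof. by case: hip. Qed.

Lemma ipC x y : ip y x = conjc (ip x y).
Proof. by case: hip. Qed.

Lemma ip_ge0 x : 0 <= ip x x.
Proof. by case: hip. Qed.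

Lemma ipDl x y z : ip (x + y) z = ip x z + ip y z.
Proof. by rewrite -[x in LHS]scale1r ipZDl mul1r. Qed.

Lemma ip0l z : ip 0 z = 0.
Proof. by apply: (@addrI _ (ip 0 z)); rewrite -ipDl !addr0. Qed.

Lemma ipZl a x z : ip (a *: x) z = a * ip x z.
Proof. by rewrite -[_ *: x]addr0 ipZDl ip0l addr0. Qed.

Lemma ipNl x z : ip (- x) z = - ip x z.
Proof. by rewrite -scaleN1r ipZl mulN1r. Qed.

Lemma ipBl x y z : ip (x - y) z = ip x z - ip y z.
Proof. by rewrite ipDl ipNl. Qed.

Lemma ipDr x y z : ip z (x + y) = ip z x + ip z y.
Proof. by rewrite ipC ipDl rmorphD /= -!ipC. Qed.

Lemma ipZr a x z : ip z (a *: x) = conjc a * ip z x.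
Proof. by rewrite ipC ipZl rmorphM /= -ipC. Qed.

Lemma ipNr x z : ip z (- x) = - ip z x.
Proof. by rewrite ipC ipNl rmorphN /= -ipC. Qed.

Lemma ipBr x y z : ip z (x - y) = ip z x - ip z y.
Proof. by rewrite ipDr ipNr. Qed.

Lemma ip0r z : ip z 0 = 0.
Proof. by rewrite ipC ip0l conjc0. Qed.

Definition sqnorm x : R := complex.Re (ip x x).

Lemma ip_sqnorm x : ip x x = (sqnorm x)%:C.
Proof.
case: hip => _ _ /(_ x) + _; rewrite /sqnorm; case: (ip x x) => a b.
by rewrite lecE /= => /andP[/eqP -> _].
Qed.

Lemma sqnorm_ge0 x : 0 <= sqnorm x.
Proof. by case: hip => _ _ /(_ x); rewrite ip_sqnorm lecR. Qed.

Lemma sqnorm_eq0 x : sqnorm x = 0 -> x = 0.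
Proof. by move=> h; case: hip => _ _ _; apply; rewrite ip_sqnorm h. Qed.


Lemma unit_sphereE x : unit_sphere ip x <-> ip x x = 1.
Proof.
rewrite /unit_sphere /= /hnorm -/(sqnorm x) ip_sqnorm.
split=> [h1|[->]]; last exact: sqrtr1.
by rewrite -(sqr_sqrtr (sqnorm_ge0 x)) h1 expr1n.
Qed.

Lemma sqr_hnorm x : hnorm ip x ^+ 2 = sqnorm x.
Proof. exact/sqr_sqrtr/sqnorm_ge0. Qed.

Lemma sqnorm_unit x : ip x x = 1 -> sqnorm x = 1.
Proof. by move=> x1; apply: complexI; rewrite -ip_sqnorm x1. Qed.

Lemma ip_scale_real (r : R) x : ip (r%:C *: x) (r%:C *: x) = (r ^+ 2 * sqnorm x)%:C.
Proof. by rewrite ipZl ipZr conjc_real ip_sqnorm mulrA -!rmorphM. Qed.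

Lemma normalize v : 0 < sqnorm v -> exists2 u, ip u u = 1 & v = (hnorm ip v)%:C *: u.
Proof.
move=> v_gt0; set r := hnorm ip v.
have r_neq0 : r != 0 by rewrite sqrtr_eq0 -ltNge.
exists ((r^-1)%:C *: v).
  by rewrite ip_scale_real exprVn sqr_hnorm mulVf ?gt_eqF.
by rewrite scalerA -rmorphM divff // scale1r.
Qed.

Lemma sqnorm_polarization x y :
  sqnorm (x + y) + sqnorm (x - y) + sqnorm (x + 'i%C *: y) + sqnorm (x - 'i%C *: y)
  = 4%:R * (sqnorm x + sqnorm y).
Proof.
apply: complexI; rewrite !rmorphD /= rmorphM /= rmorph_nat rmorphD /= -!ip_sqnorm.
rewrite !(ipDl, ipNl, ipZl, ipDr, ipNr, ipZr) conjc_i.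
(* [ring] does not know that 'i * 'i = -1: split off a multiple of 'i * 'i + 1. *)
have ii : 'i%C * 'i%C = -1 :> R[i] by rewrite -expr2 sqr_i.
transitivity (4%:R * (ip x x + ip y y) - 2%:R * ('i%C * 'i%C + 1) * ip y y).
  by ring.
by rewrite ii; ring.
Qed.

Lemma bessel1 x e : ip e e = 1 -> normc (ip x e) ^+ 2 <= sqnorm x.
Proof.
move=> he; set a := ip x e.
rewrite -lecR sqr_normc_real -ip_sqnorm -subr_ge0.
suff -> : ip x x - a * conjc a = ip (x - a *: e) (x - a *: e) by apply: ip_ge0.
by rewrite !(ipBl, ipBr, ipZl, ipZr) he (ipC x e) -/a; ring.
Qed.

Lemma bessel2 x e1 e2 : ip e1 e1 = 1 -> ip e2 e2 = 1 -> ip e1 e2 = 0 ->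
  normc (ip x e1) ^+ 2 + normc (ip x e2) ^+ 2 <= sqnorm x.
Proof.
move=> he1 he2 he12; set a := ip x e1; set b := ip x e2.
have he21 : ip e2 e1 = 0 by rewrite ipC he12 conjc0.
rewrite -lecR rmorphD /= !sqr_normc_real -ip_sqnorm -subr_ge0.
suff -> : ip x x - (a * conjc a + b * conjc b) =
    ip (x - a *: e1 - b *: e2) (x - a *: e1 - b *: e2) by apply: ip_ge0.
rewrite !(ipBl, ipBr, ipZl, ipZr) he1 he2 he12 he21 (ipC x e1) (ipC x e2) -/a -/b.
by ring.
Qed.

Lemma normc_ip_le_hnorm x e : ip e e = 1 -> normc (ip x e) <= hnorm ip x.
Proof.
move=> he; rewrite -(ger0_norm (normc_ge0 (ip x e))) -sqrtr_sqr.
exact/ler_wsqrtr/bessel1.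
Qed.

Lemma hnorm_scale c e : ip e e = 1 -> hnorm ip (c *: e) = normc c.
Proof.
move=> he; rewrite /hnorm ipZl ipZr he mulr1 -sqr_normc_real.
by rewrite /= sqrtr_sqr ger0_norm // normc_ge0.
Qed.

Lemma opnorm_neq0_unit (T : V -> V) : opnorm ip T != 0 -> exists x, ip x x = 1.
Proof.
apply: contra_neqP => no_unit; rewrite /opnorm.
suff -> : unit_sphere ip = set0 by rewrite image_set0 sup0.
by apply/seteqP; split=> // x /unit_sphereE x1; apply: no_unit; exists x.
Qed.

End InnerProduct.

Section NumericalRadius.
Variable R : realType.
Variable V : lmodType R[i].
Variable ip : V -> V -> R[i].
Hypothesis hip : inner_product ip.
Local Notation sqnorm := (sqnorm ip).

Variable A : V -> V.
Hypothesis A_lin : forall a x y, A (a *: x + y) = a *: A x + A y.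

Lemma opZ a x : A (a *: x) = a *: A x.
Proof.
have A0 : A 0 = 0.
  have := A_lin 1 0 0; rewrite !scale1r addr0 => A00.
  by apply: (@addrI _ (A 0)); rewrite addr0 -A00.
by rewrite -[_ *: x]addr0 A_lin A0 addr0.
Qed.

Lemma opD x y : A (x + y) = A x + A y.
Proof. by rewrite -[x in LHS]scale1r A_lin scale1r. Qed.

Lemma opN x : A (- x) = - A x.
Proof. by rewrite -scaleN1r opZ scaleN1r. Qed.

Local Notation P v := (ip (A v) v).

Lemma op_polarization x y : 4%:R * ip (A x) y =
  P (x + y) - P (x - y) + 'i%C * P (x + 'i%C *: y) - 'i%C * P (x - 'i%C *: y).
Proof.
rewrite !(opD, opN, opZ).
rewrite !(ipDl hip, ipNl hip, ipZl hip, ipDr hip, ipNr hip, ipZr hip) conjc_i.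
have ii : 'i%C * 'i%C = -1 :> R[i] by rewrite -expr2 sqr_i.
transitivity (4%:R * ip (A x) y + 2%:R * ('i%C * 'i%C + 1) * (ip (A y) x - ip (A x) y)).
  by rewrite ii; ring.
by ring.
Qed.

Lemma polar_bound w : (forall v, normc (P v) <= w * sqnorm v) ->
  forall x y, normc (ip (A x) y) <= w * (sqnorm x + sqnorm y).
Proof.
move=> Pw x y.
have e : 4%:R * normc (ip (A x) y) = normc (4%:R * ip (A x) y).
  by rewrite normcM normc_nat.
rewrite op_polarization in e; have := sqnorm_polarization hip x y.
set P1 := P (x + y) in e; set P2 := P (x - y) in e.
set P3 := P (x + 'i%C *: y) in e; set P4 := P (x - 'i%C *: y) in e.
have t1 := le_normcD (P1 - P2 + 'i%C * P3) (- ('i%C * P4)).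
have t2 := le_normcD (P1 - P2) ('i%C * P3).
have t3 := le_normcD P1 (- P2).
rewrite !normcN !normcM normc_i !mul1r in t1 t2 t3.
have := Pw (x + y); have := Pw (x - y).
have := Pw (x + 'i%C *: y); have := Pw (x - 'i%C *: y).
rewrite -/P1 -/P2 -/P3 -/P4; nra.
Qed.

Lemma numerical_bound_homogeneous w :
  (forall u, ip u u = 1 -> normc (P u) <= w) -> forall v, normc (P v) <= w * sqnorm v.
Proof.
move=> Pw v; have [v0|v_neq0] := eqVneq (sqnorm v) 0.
  by rewrite v0 (sqnorm_eq0 hip v0) (ip0r hip) normc0 mulr0.
have v_pos : 0 < sqnorm v by rewrite lt_def v_neq0 sqnorm_ge0.
have [u /Pw Pu ev] := normalize hip v_pos.
have -> : P v = (sqnorm v)%:C * P u.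
  rewrite {1 2}ev opZ (ipZl hip) (ipZr hip) conjc_real mulrA -rmorphM -expr2.
  by rewrite (sqr_hnorm hip).
rewrite normcM normc_real ger0_norm ?sqnorm_ge0 // mulrC.
by rewrite ler_wpM2r ?sqnorm_ge0.
Qed.

Lemma hnorm_op_le_numerical w : (forall u, ip u u = 1 -> normc (P u) <= w) ->
  forall x, ip x x = 1 -> hnorm ip (A x) <= 2%:R * w.
Proof.
move=> Pw x x1; have w_ge0 : 0 <= w := le_trans (normc_ge0 _) (Pw x x1).
have [->|Ax_neq0] := eqVneq (hnorm ip (A x)) 0; first by rewrite mulr_ge0.
have Ax_pos : 0 < sqnorm (A x).
  by rewrite -(sqr_hnorm hip) expr2 mulr_gt0 // lt_def Ax_neq0 sqrtr_ge0.
have [y y1 eAx] := normalize hip Ax_pos.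
have := polar_bound (numerical_bound_homogeneous Pw) x y.
rewrite {1}eAx (ipZl hip) y1 mulr1 normc_real ger0_norm ?sqrtr_ge0 //.
by rewrite !(sqnorm_unit hip) // mulrC.
Qed.

Lemma opnorm_le_numerical w : (exists x, ip x x = 1) ->
  (forall u, ip u u = 1 -> normc (P u) <= w) -> opnorm ip A <= 2%:R * w.
Proof.
move=> [x0 x01] Pw; apply: ge_sup.
  by exists (hnorm ip (A x0)), x0 => //; apply/(unit_sphereE hip).
by move=> _ [x /(unit_sphereE hip) x1 <-]; apply: hnorm_op_le_numerical.
Qed.

End NumericalRadius.

Section WeightedNumericalRadius.
Variable R : realType.
Variable V : lmodType R[i].
Variable ip : V -> V -> R[i].
Hypothesis hip : inner_product ip.

Variables A B : V -> V.
Hypotheses (hA : bounded_op ip A) (hAB : is_adjoint ip A B) (hA1 : opnorm ip A = 1).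
Variables (f g : R -> R) (t : R).

Lemma ip_weighted x : ip ((f t)%:C *: A x + (g t)%:C *: B x) x =
  (f t)%:C * ip (A x) x + (g t)%:C * conjc (ip (A x) x).
Proof. by rewrite (ipDl hip) !(ipZl hip) (ipC hip x (B x)) -hAB. Qed.

Lemma numerical_le1 x : ip x x = 1 -> normc (ip (A x) x) <= 1.
Proof.
move=> x1; apply: le_trans (normc_ip_le_hnorm hip _ x1) _; rewrite -hA1.
apply: ub_le_sup; last by exists x => //; apply/(unit_sphereE hip).
case: hA => _ [M AM]; exists M => _ [y /(unit_sphereE hip) y1 <-].
by rewrite -[M]mulr1 -(sqrtr1 R) -(sqnorm_unit hip y1); apply: AM.
Qed.

Lemma omega_t_has_ubound : has_ubound
  [set normc (ip ((f t)%:C *: A x + (g t)%:C *: B x) x) | x in unit_sphere ip].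
Proof.
exists (`|f t| + `|g t|) => _ [x /(unit_sphereE hip) x1 <-].
rewrite ip_weighted; have Ax1 := numerical_le1 x1.
have := le_normcD ((f t)%:C * ip (A x) x) ((g t)%:C * conjc (ip (A x) x)).
rewrite !normcM !normc_real normc_conj.
have := normc_ge0 (ip (A x) x); have := normr_ge0 (f t); have := normr_ge0 (g t).
nra.
Qed.

Lemma numerical_le_omega_t x : ip x x = 1 ->
  normc (ip (A x) x) <= omega_t ip f g t A B + (`|f t - 1| + `|g t|).
Proof.
move=> x1; set z := ip (A x) x; set wz := (f t)%:C * z + (g t)%:C * conjc z.
have wz_le : normc wz <= omega_t ip f g t A B.
  apply: ub_le_sup omega_t_has_ubound _ _.
  by exists x; [apply/(unit_sphereE hip) | rewrite ip_weighted].
have -> : z = wz - (f t - 1)%:C * z - (g t)%:C * conjc z.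
  by rewrite /wz rmorphB rmorph1 /=; ring.
have := le_normcD (wz - (f t - 1)%:C * z) (- ((g t)%:C * conjc z)).
have := le_normcD wz (- ((f t - 1)%:C * z)).
rewrite !normcN !normcM !normc_real normc_conj.
have := numerical_le1 x1; have := normc_ge0 z.
have := normr_ge0 (f t - 1); have := normr_ge0 (g t).
nra.
Qed.

Lemma omega_t_ge : 1 / 2 - (`|f t - 1| + `|g t|) <= omega_t ip f g t A B.
Proof.
have [x0 x01] : exists x, ip x x = 1.
  by apply: (opnorm_neq0_unit hip (T := A)); rewrite hA1 oner_neq0.
have := opnorm_le_numerical hip hA.1 (ex_intro _ x0 x01) numerical_le_omega_t.
rewrite hA1; lra.
Qed.

End WeightedNumericalRadius.

Section RankOne.
Variable R : realType.
Variable V : lmodType R[i].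
Variable ip : V -> V -> R[i].
Hypothesis hip : inner_product ip.

Definition rank_one (u v : V) (x : V) : V := ip x u *: v.

Lemma rank_one_adjoint u v : is_adjoint ip (rank_one u v) (rank_one v u).
Proof.
move=> x y; rewrite /rank_one (ipZl hip) (ipZr hip) (ipC hip v y) conjcK.
exact: mulrC.
Qed.

Variables u v : V.
Hypotheses (u1 : ip u u = 1) (v1 : ip v v = 1).

Lemma hnorm_rank_one x : hnorm ip (rank_one u v x) = normc (ip x u).
Proof. exact: hnorm_scale. Qed.

Lemma rank_one_bounded : bounded_op ip (rank_one u v).
Proof.
split=> [a x y|]; first by rewrite /rank_one (ipZDl hip) scalerDl scalerA.
by exists 1 => x; rewrite mul1r hnorm_rank_one normc_ip_le_hnorm.
Qed.

Lemma opnorm_rank_one : opnorm ip (rank_one u v) = 1.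
Proof.
have u_unit : unit_sphere ip u by apply/(unit_sphereE hip).
apply/le_anti/andP; split.
  apply: ge_sup => [|_ [x x1 <-]]; first by exists (hnorm ip (rank_one u v u)), u.
  by rewrite hnorm_rank_one -x1 normc_ip_le_hnorm.
apply: ub_le_sup; last by exists u => //; rewrite hnorm_rank_one u1 normc1.
by exists 1 => _ [x x1 <-]; rewrite hnorm_rank_one -x1 normc_ip_le_hnorm.
Qed.

Hypothesis uv : ip u v = 0.

Lemma omega_t_rank_one_le (f g : R -> R) (t : R) :
  omega_t ip f g t (rank_one u v) (rank_one v u) <= (`|f t| + `|g t|) / 2.
Proof.
apply: ge_sup => [|_ [x /(unit_sphereE hip) x1 <-]].
  by eexists; exists u => //; apply/(unit_sphereE hip).
rewrite /rank_one (ipDl hip) !(ipZl hip) (ipC hip x u) (ipC hip x v).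
have := bessel2 hip x u1 v1 uv; rewrite (sqnorm_unit hip x1).
set a := ip x u; set b := ip x v => ab1.
have := le_normcD ((f t)%:C * (a * conjc b)) ((g t)%:C * (b * conjc a)).
rewrite !normcM !normc_conj !normc_real.
have ab_le : normc a * normc b <= 1 / 2 by have := sqr_ge0 (normc a - normc b); nra.
have := normr_ge0 (f t); have := normr_ge0 (g t).
have := normc_ge0 a; have := normc_ge0 b; nra.
Qed.

End RankOne.

Section WeightedNumericalIndex.
Variable R : realType.
Variable V : lmodType R[i].
Variable ip : V -> V -> R[i].
Hypothesis hip : inner_product ip.
Variables (f g : R -> R) (t : R).

Let admissible_omegas := [set w : R | exists A B : V -> V,
  [/\ bounded_op ip A, opnorm ip A = 1, is_adjoint ip A B & w = omega_t ip f g t A B]].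

Lemma admissible_omegas_lbound :
  lbound admissible_omegas (1 / 2 - (`|f t - 1| + `|g t|)).
Proof. by move=> _ [A [B [hA hA1 hAB ->]]]; apply: omega_t_ge. Qed.

Variables u v : V.
Hypotheses (u1 : ip u u = 1) (v1 : ip v v = 1) (uv : ip u v = 0).

Lemma admissible_omega_rank_one :
  admissible_omegas (omega_t ip f g t (rank_one ip u v) (rank_one ip v u)).
Proof.
exists (rank_one ip u v), (rank_one ip v u); split=> //.
- exact: rank_one_bounded.
- exact: opnorm_rank_one.
- exact: rank_one_adjoint.
Qed.

Lemma n_t_ge : 1 / 2 - (`|f t - 1| + `|g t|) <= n_t ip f g t.
Proof.
by apply: lb_le_inf admissible_omegas_lbound; eexists; exact: admissible_omega_rank_one.
Qed.

Lemma n_t_le : n_t ip f g t <= (`|f t| + `|g t|) / 2.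
Proof.
have lb : has_lbound admissible_omegas by eexists; exact: admissible_omegas_lbound.
apply: le_trans (ge_inf lb admissible_omega_rank_one) _.
exact: omega_t_rank_one_le.
Qed.

End WeightedNumericalIndex.

Theorem corollary4p9 (R : realType) (V : lmodType R[i]) (ip : V -> V -> R[i])
  (hH : hilbert ip)
  (hdim : exists x y : V, hnorm ip x = 1 /\ hnorm ip y = 1 /\ ip x y = 0)
  (phi psi : nat -> R -> R)
  (hphic : forall n, {within `[(0:R), 1], continuous (phi n)})
  (hpsic : forall n, {within `[(0:R), 1], continuous (psi n)})
  (hphi : forall t, t \in `[(0:R), 1] -> phi n t @[n --> \oo] --> (1:R))
  (hpsi : forall t, t \in `[(0:R), 1] -> psi n t @[n --> \oo] --> (0:R)) :
  forall t, t \in `[(0:R), 1] -> n_t ip (phi n) (psi n) t @[n --> \oo] --> (1 / 2 : R).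
Proof.
move=> t t01; have hip : inner_product ip := hH.1.
have [u [v [/(unit_sphereE hip) u1 [/(unit_sphereE hip) v1 uv]]]] := hdim.
have phi_dist : `|phi n t - 1| @[n --> \oo] --> (0 : R).
  rewrite -(@normr0 _ R) -(subrr (1 : R)).
  by apply: cvg_norm; apply: (cvgB (hphi t t01) (cvg_cst (1 : R))).
have psi_abs : `|psi n t| @[n --> \oo] --> (0 : R).
  by rewrite -(@normr0 _ R); apply: cvg_norm; apply: hpsi.
have phi_abs : `|phi n t| @[n --> \oo] --> (1 : R).
  by rewrite -(@normr1 R); apply: cvg_norm; apply: hphi.
apply: (squeeze_cvgr (f := fun n => 1 / 2 - (`|phi n t - 1| + `|psi n t|))
                     (h := fun n => (`|phi n t| + `|psi n t|) / 2)).
- by apply: nearW => n; rewrite (n_t_ge hip _ _ _ u1 v1) (n_t_le hip _ _ _ u1 v1 uv).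
- rewrite -[X in _ --> X]subr0 -[X in _ --> _ - X](addr0 0).
  by apply: (cvgB (cvg_cst (1 / 2 : R)) (cvgD phi_dist psi_abs)).
- have -> : (1 / 2 : R) = (1 + 0) / 2 by rewrite addr0.
  by apply: (cvgMr_tmp (b := 2^-1) (cvgD phi_abs psi_abs)).
Qed.
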